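(* Let $X$ be a cubic vertex-transitive graph such that both $1$ and $-1$ are simple eigenvalues of $X$. Then $X$ is bipartite.
   Context: Eigenvalues are those of the adjacency matrix. An eigenvalue is simple if its eigenspace is $1$-dimensional. *)

From HB Require Import structures.
From mathcomp Require Import all_boot all_order all_algebra all_fingroup all_field.
Set Implicit Arguments. Unset Strict Implicit. Unset Printing Implicit Defensive.
Import GRing.Theory Num.Theory.
Local Open Scope ring_scope.

Definition simple_graph (n : nat) (e : rel 'I_n) : Prop :=
  symmetric e /\ irreflexive e.

Definition cubic (n : nat) (e : rel 'I_n) : Prop :=
  forall x : 'I_n, #|[set y | e x y]| = 3%N.

Definition graph_aut (n : nat) (e : rel 'I_n) (s : {perm 'I_n}) : Prop :=
  forall u v, e (s u) (s v) = e u v.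

Definition vertex_transitive (n : nat) (e : rel 'I_n) : Prop :=
  forall x y : 'I_n, exists s : {perm 'I_n}, graph_aut e s /\ s x = y.

Definition adjmx (n : nat) (e : rel 'I_n) : 'M[algC]_n :=
  \matrix_(i, j) (e i j)%:R.

Definition simple_eigenvalue (n : nat) (A : 'M[algC]_n) (a : algC) : Prop :=
  \rank (eigenspace A a) = 1%N.

Definition bipartite (n : nat) (e : rel 'I_n) : Prop :=
  exists c : 'I_n -> bool, forall u v, e u v -> c u != c v.

(* The eigenline of a simple eigenvalue is invariant under every
   automorphism, which therefore scales a spanning eigenvector; for a real
   eigenvalue the scalar is real of modulus 1, so by vertex-transitivity the
   eigenvectors v (for 1) and w (for -1) can be taken with entries +-1.  In a
   cubic graph every vertex then has exactly one neighbour at which v changes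
   sign and exactly one at which w keeps its sign.  Automorphisms scale v w by a
   global sign, so whether these two neighbours coincide does not depend on the
   vertex.  If they always coincide, v w changes sign along every edge and
   2-colours the graph.  Otherwise v w is an eigenvector for 1, hence a multiple
   of v, so w is constant: impossible, since constants have eigenvalue 3. *)

From HB Require Import structures.
From mathcomp Require Import all_boot all_order all_algebra all_fingroup all_field.
From mathcomp Require Import zify.
Set Implicit Arguments. Unset Strict Implicit. Unset Printing Implicit Defensive.
Import GRing.Theory Num.Theory.
Local Open Scope ring_scope.

Definition spans_eigenspace (F : fieldType) n (A : 'M[F]_n) a (v : 'rV_n) :=
  v *m A = a *: v /\ forall u, u *m A = a *: u -> exists c, u = c *: v.

Lemma rank1_eigenspace_spanned (F : fieldType) n (A : 'M[F]_n) a :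
  \rank (eigenspace A a) = 1%N -> exists2 v, v != 0 & spans_eigenspace A a v.
Proof.
move=> rank1.
have : eigenvalue A a by rewrite /eigenvalue -mxrank_eq0 rank1.
case/eigenvalueP => v Av v_neq0; exists v => //; split=> // u Au.
have v_sub : (v <= eigenspace A a)%MS by apply/eigenspaceP.
have eigen_sub : (eigenspace A a <= v)%MS.
  by have := mxrank_leqif_sup v_sub; rewrite rank_rV v_neq0 rank1 => -[_ <-].
by apply/sub_rVP; apply: submx_trans eigen_sub; apply/eigenspaceP.
Qed.

Lemma spans_eigenspaceZ (F : fieldType) n (A : 'M[F]_n) a v c :
  c != 0 -> spans_eigenspace A a v -> spans_eigenspace A a (c *: v).
Proof.
move=> c_neq0 [Av span]; split.
  by rewrite -scalemxAl Av scalerA mulrC -scalerA.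
by move=> u /span [d ->]; exists (d / c); rewrite scalerA mulfVK.
Qed.

Lemma real_spanning_eigenvector n (A : 'M[algC]_n) a :
  map_mx Num.conj A = A -> a^* = a -> simple_eigenvalue A a ->
  exists v x0, [/\ spans_eigenspace A a v, v 0 x0 = 1 & map_mx Num.conj v = v].
Proof.
move=> A_real a_real /rank1_eigenspace_spanned [v0 v0_neq0 span0].
have [x0 v0x0_neq0] : exists x0, v0 0 x0 != 0.
  apply/existsP; apply: contraR v0_neq0 => /existsPn v0_eq0.
  by apply/eqP/rowP => x; rewrite mxE; apply/eqP/negPn/v0_eq0.
have [Av span] := spans_eigenspaceZ (invr_neq0 v0x0_neq0) span0.
set v := _ *: v0 in Av span.
have vx0 : v 0 x0 = 1 by rewrite mxE mulVf.
clearbody v.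
exists v, x0; split=> //.
have [c vc_eq] : exists c, map_mx Num.conj v = c *: v.
  by apply: span; rewrite -A_real -map_mxM Av map_mxZ /= a_real.
have := congr1 (fun w : 'rV_n => w 0 x0) vc_eq.
rewrite !mxE vx0 mulr1 /= conjC1 => c1.
by rewrite vc_eq -c1 scale1r.
Qed.

Lemma col_perm_scaled_norm1 n (v : 'rV[algC]_n) (s : {perm 'I_n}) c :
  v != 0 -> col_perm s v = c *: v -> `|c| = 1.
Proof.
move=> v_neq0 sv.
have sv_exp m : col_perm (s ^+ m)%g v = c ^+ m *: v.
  elim: m => [|m IHm]; first by rewrite expg0 col_perm1 scale1r.
  by rewrite expgSr col_permM sv linearZ /= IHm scalerA -exprS.
have : (c ^+ #[s]%g - 1) *: v = 0.
  by rewrite scalerBl -sv_exp expg_order col_perm1 scale1r subrr.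
move/eqP; rewrite scaler_eq0 (negbTE v_neq0) orbF subr_eq0 => /eqP c_order.
apply/eqP; rewrite -(pexpr_eq1 (order_gt0 s)) ?normr_ge0 //.
by rewrite -normrX c_order normr1.
Qed.

Lemma real_normr_eq1 (R : numDomainType) (x : R) :
  x \is Num.real -> `|x| = 1 -> x = 1 \/ x = -1.
Proof.
rewrite realE => /orP [x_ge0 | x_le0] x_norm.
  by left; rewrite -(ger0_norm x_ge0).
by right; rewrite -[x]opprK -(ler0_norm x_le0) x_norm.
Qed.

Section AdjacencyMatrix.

Variables (n : nat) (e : rel 'I_n).

Lemma adjmx_conj : map_mx Num.conj (adjmx e) = adjmx e.
Proof. by apply/matrixP => i j; rewrite !mxE conjC_nat. Qed.

Lemma col_perm_adjmx (s : {perm 'I_n}) (u : 'rV[algC]_n) :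
  graph_aut e s -> col_perm s u *m adjmx e = col_perm s (u *m adjmx e).
Proof.
move=> s_aut; apply/rowP => j; rewrite !mxE.
rewrite [RHS](reindex_inj (@perm_inj _ s)) /=; apply: eq_bigr => i _.
by rewrite !mxE s_aut.
Qed.

Lemma vertex_transitive_sign_eigenvector a :
  vertex_transitive e -> a^* = a -> simple_eigenvalue (adjmx e) a ->
  exists2 v, spans_eigenspace (adjmx e) a v & forall x, v 0 x = 1 \/ v 0 x = -1.
Proof.
move=> vt a_real simple_a.
have [v [x0 [[Av span] vx0 v_real]]] :=
  real_spanning_eigenvector adjmx_conj a_real simple_a.
exists v => // y; have [s [s_aut sx0]] := vt x0 y.
have [c sv] : exists c, col_perm s v = c *: v.
  by apply: span; rewrite col_perm_adjmx // Av linearZ.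
have c_vy : c = v 0 y.
  by have := congr1 (fun w : 'rV_n => w 0 x0) sv; rewrite !mxE vx0 mulr1 sx0.
have v_neq0 : v != 0.
  by apply: contra_eqN vx0 => /eqP ->; rewrite mxE eq_sym oner_eq0.
rewrite -c_vy; apply: real_normr_eq1; last exact: col_perm_scaled_norm1 sv.
by rewrite CrealE c_vy -{2}v_real mxE.
Qed.

End AdjacencyMatrix.

Definition is_sign (z : int) := z = 1 \/ z = -1.

Definition sign_fun n (f : 'I_n -> int) := forall x, is_sign (f x).

Definition proportional n (f g : 'I_n -> int) := forall x y, f x * g y = f y * g x.

Definition eigenfun n (e : rel 'I_n) (a : int) (f : 'I_n -> int) :=
  forall x, \sum_(y | e x y) f y = a * f x.

Definition introw n (f : 'I_n -> int) : 'rV[algC]_n := \row_x (f x)%:~R.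

Lemma sign_introw n (v : 'rV[algC]_n) :
  (forall x, v 0 x = 1 \/ v 0 x = -1) -> exists2 f, sign_fun f & v = introw f.
Proof.
have m1_neq1 : (-1 : algC) != 1.
  by rewrite eq_sym -addr_eq0 -[1 + 1]/(2%:R : algC) pnatr_eq0.
move=> v_sign; exists (fun x => if v 0 x == 1 then 1 else -1).
  by move=> x; case: (v 0 x == 1); [left | right].
apply/rowP => x; rewrite mxE.
by case: (v_sign x) => ->; rewrite ?eqxx ?(negbTE m1_neq1) ?rmorphN.
Qed.

Lemma introw_scaled_proportional n (f g : 'I_n -> int) c :
  introw f = c *: introw g -> proportional f g.
Proof.
move=> fg x y; apply: (@intr_inj algC); rewrite !rmorphM /=.
have fE z : (f z)%:~R = c * (g z)%:~R :> algC.
  by have := congr1 (fun w : 'rV_n => w 0 z) fg; rewrite !mxE.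
by rewrite !fE mulrAC.
Qed.

Lemma col_perm_introw n (s : {perm 'I_n}) f : col_perm s (introw f) = introw (f \o s).
Proof. by apply/rowP => x; rewrite !mxE. Qed.

Lemma introw_eigenP n (e : rel 'I_n) a f : symmetric e ->
  introw f *m adjmx e = a%:~R *: introw f <-> eigenfun e a f.
Proof.
move=> e_sym.
have entryE x : (introw f *m adjmx e) 0 x = (\sum_(y | e x y) f y)%:~R.
  rewrite mxE rmorph_sum [RHS]big_mkcond /=; apply: eq_bigr => y _.
  by rewrite !mxE e_sym; case: (e x y); rewrite ?mulr1 ?mulr0.
split=> [fa x | fa].
  by apply: (@intr_inj algC); rewrite -entryE fa /introw !mxE rmorphM.
by apply/rowP => x; rewrite entryE fa /introw !mxE rmorphM.
Qed.

Lemma simple_eigenvalue_sign_eigenfun n (e : rel 'I_n) (a : int) :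
  symmetric e -> vertex_transitive e -> simple_eigenvalue (adjmx e) a%:~R ->
  exists f, [/\ sign_fun f, eigenfun e a f,
    forall s, graph_aut e s -> proportional (f \o s) f &
    forall g, eigenfun e a g -> proportional g f].
Proof.
move=> e_sym vt simple_a.
have a_real : (a%:~R : algC)^* = a%:~R by apply/conj_intr/intr_int.
have [v [Av span] /sign_introw [f f_sign v_f]] :=
  vertex_transitive_sign_eigenvector vt a_real simple_a.
rewrite {}v_f in Av span.
exists f; split=> // [|s s_aut|g /(introw_eigenP _ _ e_sym) /span [c g_f]].
- exact/introw_eigenP.
- have [c fs_f] : exists c, introw (f \o s) = c *: introw f.
    by apply: span; rewrite -col_perm_introw col_perm_adjmx // Av linearZ.
  exact: introw_scaled_proportional fs_f.
- exact: introw_scaled_proportional g_f.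
Qed.

Lemma cubic_neighbours n (e : rel 'I_n) x : cubic e ->
  exists y1 y2 y3, (forall y, e x y = (y \in [:: y1; y2; y3])) /\
    forall F : 'I_n -> int, \sum_(y | e x y) F y = F y1 + F y2 + F y3.
Proof.
move=> /(_ x); rewrite cardE.
have := enum_uniq [set y | e x y].
case nbrs: (enum _) => [|y1 [|y2 [|y3 [|? ?]]]] //= nbrs_uniq _.
have nbrsE y : e x y = (y \in [:: y1; y2; y3]) by rewrite -nbrs mem_enum inE.
exists y1, y2, y3; split=> // F.
rewrite (eq_bigl _ _ nbrsE) -big_uniq ?nbrs_uniq //.
by rewrite !big_cons big_nil /= addr0 addrA.
Qed.

Lemma sign_triple_products (p p1 p2 p3 q q1 q2 q3 : int) :
  is_sign p -> is_sign p1 -> is_sign p2 -> is_sign p3 ->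
  is_sign q -> is_sign q1 -> is_sign q2 -> is_sign q3 ->
  p1 + p2 + p3 = p -> q1 + q2 + q3 = - q ->
  p1 * q1 = - (p * q) /\ p2 * q2 = - (p * q) /\ p3 * q3 = - (p * q) \/
  p1 * q1 + p2 * q2 + p3 * q3 = p * q.
Proof. by do 8 case=> ->; lia. Qed.

Section SignFunctions.

Variables (n : nat) (e : rel 'I_n).

Definition flips_at (g : 'I_n -> int) x := [forall y, e x y ==> (g y == - g x)].

Lemma flips_at_transitive g x y :
  vertex_transitive e -> sign_fun g ->
  (forall s, graph_aut e s -> proportional (g \o s) g) ->
  flips_at g x -> flips_at g y.
Proof.
move=> vt g_sign g_aut flips_x; have [s [s_aut <-]] := vt x y.
apply/forallP => z; apply/implyP => e_sx_z.
have e_x_z' : e x (s^-1 z)%g by rewrite -s_aut permKV.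
have /eqP g_z' := implyP (forallP flips_x _) e_x_z'.
have := g_aut s s_aut x (s^-1 z)%g; rewrite /= permKV g_z'.
by case: (g_sign x) => -> ?; apply/eqP; lia.
Qed.

Lemma flips_everywhere_bipartite g :
  sign_fun g -> (forall x, flips_at g x) -> bipartite e.
Proof.
move=> g_sign flips; exists (fun x => g x == 1) => u v e_uv.
have /eqP := implyP (forallP (flips u) v) e_uv.
by case: (g_sign u) => ->; case: (g_sign v) => ->.
Qed.

Lemma product_sum_unless_flips fv fw x :
  cubic e -> sign_fun fv -> sign_fun fw ->
  eigenfun e 1 fv -> eigenfun e (-1) fw ->
  ~~ flips_at (fun z => fv z * fw z) x ->
  \sum_(y | e x y) fv y * fw y = fv x * fw x.
Proof.
move=> cub fv_sign fw_sign fv_eig fw_eig; apply: contraNeq => sum_neq.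
have [y1 [y2 [y3 [nbrsE sumE]]]] := cubic_neighbours x cub.
have fv_sum := fv_eig x; have fw_sum := fw_eig x.
rewrite !sumE mul1r mulN1r in fv_sum fw_sum sum_neq.
have [[p1 [p2 p3]] | /eqP] := sign_triple_products (fv_sign x) (fv_sign y1)
  (fv_sign y2) (fv_sign y3) (fw_sign x) (fw_sign y1) (fw_sign y2) (fw_sign y3)
  fv_sum fw_sum; last by rewrite (negbTE sum_neq).
apply/forallP => y; apply/implyP.
by rewrite nbrsE !inE => /or3P [] /eqP ->; apply/eqP.
Qed.

End SignFunctions.

Unset Implicit Arguments.
Theorem theorem3p1 (n : nat) (e : rel 'I_n) :
  simple_graph e -> cubic e -> vertex_transitive e ->
  simple_eigenvalue (adjmx e) 1 -> simple_eigenvalue (adjmx e) (-1) ->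
  bipartite e.
Proof.
move=> [e_sym _] cub vt simple_1 simple_m1.
have [fv [fv_sign fv_eig fv_aut fv_span]] :=
  simple_eigenvalue_sign_eigenfun (a := 1) e_sym vt simple_1.
have [fw [fw_sign fw_eig fw_aut _]] :=
  simple_eigenvalue_sign_eigenfun (a := -1) e_sym vt simple_m1.
pose p x := fv x * fw x.
have p_sign : sign_fun p.
  by move=> x; rewrite /p /is_sign; case: (fv_sign x) (fw_sign x) => -> [] ->; lia.
have p_aut s : graph_aut e s -> proportional (p \o s) p.
  by move=> s_aut x y; rewrite /p /= mulrACA fv_aut // fw_aut // mulrACA.
have [/forallP flips | /forallPn [x0 not_flips_x0]] :=
  boolP [forall x, flips_at e p x].
  exact: flips_everywhere_bipartite p_sign flips.
have p_eig : eigenfun e 1 p.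
  move=> x; rewrite mul1r; apply: product_sum_unless_flips => //.
  by apply: contra not_flips_x0; apply: flips_at_transitive.
have fw_const x : fw x = fw x0.
  have := fv_span p p_eig x x0; rewrite /p.
  by case: (fv_sign x) (fv_sign x0) => -> [] ->; lia.
have [y1 [y2 [y3 [_ sumE]]]] := cubic_neighbours x0 cub.
have := fw_eig x0; rewrite sumE !fw_const.
by case: (fw_sign x0) => ->; lia.
Qed.
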